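(* Let $a$ and $b$ be relatively prime integers with $1<a<b$, let $(u,v)$ be the definitely least solution of $ax+by=1$, and let $S=\langle a,b\rangle$. Then every nonempty set $I_{i,a}(S)$, $i\in\{1,\dots,a-1\}$, has exactly $|u|$ elements.
   Context: $\langle a,b\rangle=\{\lambda_1a+\lambda_2b:\lambda_1,\lambda_2\in\mathbb{N}\}$. $I(S)$ is the set of isolated gaps of $S$ ($x\in\mathbb{N}\setminus S$ with $x-1,x+1\in S$), and $I_{i,a}(S)=\{s\in I(S):s\equiv i\pmod a\}$. The definitely least solution $(u,v)$ of $ax+by=1$ is the unique integer solution with $|u|,|v|$ minimal; equivalently the one with $|u|\le b/2$, $|v|\le a/2$. *)

From mathcomp Require Import all_boot all_order all_algebra.
Set Implicit Arguments. Unset Strict Implicit. Unset Printing Implicit Defensive.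
Import Order.TTheory GRing.Theory Num.Theory.

Definition in_semigroup2 (a b x : nat) : Prop :=
  exists l1 l2 : nat, x = l1 * a + l2 * b.

Definition isolated_gap (a b x : nat) : Prop :=
  0 < x /\ ~ in_semigroup2 a b x /\ in_semigroup2 a b x.-1 /\ in_semigroup2 a b x.+1.

Definition in_I_ia (a b i x : nat) : Prop :=
  isolated_gap a b x /\ x %% a = i %% a.

Definition definitely_least (a b : nat) (u v : int) : Prop :=
  (a%:Z * u + b%:Z * v = 1)%R /\ (2 * `|u| <= b)%N /\ (2 * `|v| <= a)%N.

From mathcomp Require Import all_boot all_order all_algebra zify ring.
Import Order.TTheory GRing.Theory Num.Theory.
Set Implicit Arguments. Unset Strict Implicit. Unset Printing Implicit Defensive.

(* Every integer can be written x = c b - k a with 0 <= c < a, and x lies in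
   S = <a,b> iff k <= 0 (c b is the Apery element of the class of x mod a).
   As 1 = +-(|v| b - |u| a), the neighbours x + 1 and x - 1 are, in some order,
   (c + |v|) b - (k + |u|) a and (c - |v|) b - (k - |u|) a; reducing their
   coefficients of b modulo a shows that x is an isolated gap iff
   |v| <= c, a <= c + |v| and 1 <= k <= |u|. The conditions on c only depend
   on the class of x mod a, so a class containing one isolated gap contains
   exactly the |u| gaps c b - k a, 1 <= k <= |u|. *)

Local Open Scope ring_scope.

Definition in_semigroup2z (a b : nat) (z : int) : Prop :=
  exists l1 l2 : nat, z = (l1 * a + l2 * b)%N%:Z.

Lemma in_semigroup2zE (a b x : nat) :
  in_semigroup2z a b x <-> in_semigroup2 a b x.
Proof. by split=> -[l1 [l2 E]]; exists l1, l2; [case: E | rewrite E]. Qed.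

Section Apery.

Variables a b : nat.
Hypotheses (a_gt0 : (0 < a)%N) (coprime_ab : coprime a b).

Lemma in_semigroup2zP (c k : int) : 0 <= c < a ->
  in_semigroup2z a b (c * b - k * a) <-> k <= 0.
Proof.
move=> /andP[c_ge0 c_lt_a]; split=> [[l1 [l2 E]] | k_le0]; last first.
  by exists `|k|%N, `|c|%N; rewrite PoszD !PoszM; lia.
have : (a %| (c - l2%:Z) * b)%Z.
  by apply/dvdzP; exists (l1%:Z + k); rewrite mulrDl; lia.
rewrite Gauss_dvdzl ?coprimezE // => /dvdzP[t Et].
have t_le0 : t <= 0 by nia.
nia.
Qed.

Variables m n : nat.

Lemma in_semigroup2z_up (c k : int) : 0 <= c < a -> (m <= a)%N -> 0 < k ->
  k + n <= b -> in_semigroup2z a b ((c + m) * b - (k + n) * a) <-> a%:Z <= c + m.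
Proof.
move=> c_range m_le_a k_gt0 kn_le_b; case: (ltrP (c + m) a%:Z) => cm_a.
  rewrite in_semigroup2zP; lia.
have -> : (c + m) * b - (k + n) * a =
          (c + m - a%:Z) * b - (k + n - b%:Z) * a by ring.
rewrite in_semigroup2zP; lia.
Qed.

Lemma in_semigroup2z_down (c k : int) : 0 <= c < a -> (m <= a)%N -> n%:Z < k + b ->
  in_semigroup2z a b ((c - m%:Z) * b - (k - n%:Z) * a) <-> m%:Z <= c /\ k <= n.
Proof.
move=> c_range m_le_a n_lt; case: (ltrP c m%:Z) => c_m.
  have -> : (c - m%:Z) * b - (k - n%:Z) * a =
            (c - m%:Z + a%:Z) * b - (k - n%:Z + b%:Z) * a by ring.
  rewrite in_semigroup2zP; lia.
rewrite in_semigroup2zP; lia.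
Qed.

End Apery.

Lemma bezout_abs (a b : nat) (u v : int) : (1 < a)%N -> (1 < b)%N ->
  a%:Z * u + b%:Z * v = 1 ->
  (`|v| * b)%:Z - (`|u| * a)%:Z = 1 \/ (`|u| * a)%:Z - (`|v| * b)%:Z = 1.
Proof. move=> a_gt1 b_gt1; case: u => [n|n]; case: v => [m|m] /=; nia. Qed.

Lemma apery_decomposition (a b : nat) (u v x : int) : (0 < a)%N ->
  a%:Z * u + b%:Z * v = 1 ->
  exists c : nat, exists k : int, (c < a)%N /\ x = c%:Z * b - k * a.
Proof.
move=> a_gt0 bezout.
exists `|((x * v) %% a)%Z|%N, (- (x * u + b%:Z * ((x * v) %/ a)%Z)).
have a_neq0 : a%:Z != 0 by rewrite -lt0n.
rewrite -ltz_nat abszE ger0_norm ?modz_ge0 ?ltz_pmod ?ltz_nat //; split=> //.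
have := divz_eq (x * v) a; have : x = x * (a%:Z * u + b%:Z * v) by rewrite bezout mulr1.
nia.
Qed.

Lemma eq_modn_subz (a x y : nat) (k : int) : x%:Z = y%:Z - k * a -> x = y %[mod a].
Proof.
move=> Exy; apply/eqP; rewrite -eqz_nat -!modz_nat Exy.
by rewrite -mulNr addrC modzMDl.
Qed.

Section IsolatedGaps.

Variables (a b m n : nat).
Hypotheses (a_gt0 : (0 < a)%N) (coprime_ab : coprime a b).
Hypotheses (n_le : (2 * n <= b)%N) (m_le : (2 * m <= a)%N).
Hypothesis bezout : (m * b)%:Z - (n * a)%:Z = 1 \/ (n * a)%:Z - (m * b)%:Z = 1.

Lemma isolated_gap_pos (c k : int) : m%:Z <= c -> a%:Z <= c + m -> k <= n ->
  k * a < c * b.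
Proof.
move=> m_le_c a_le_cm k_le_n; have : k * a <= n%:Z * a by nia.
case: bezout => E; first by nia.
case: (ltrP m%:Z c) => m_c; first by nia.
(* c = m forces a = 2 m, and then n a = m (2 n) <= m b contradicts n a = m b + 1. *)
have c_m : c = m by lia.
have a_2m : a = (2 * m)%N by lia.
nia.
Qed.

Lemma isolated_gapE (x c : nat) (k : int) : (c < a)%N -> x%:Z = c%:Z * b - k * a ->
  isolated_gap a b x <-> [/\ (m <= c)%N, (a <= c + m)%N & 0 < k <= n].
Proof.
move=> c_lt_a Ex; have c_range : 0 <= c%:Z < a by lia.
have m_le_a : (m <= a)%N by lia.
set up := (c%:Z + m) * b - (k + n) * a.
set down := (c%:Z - m%:Z) * b - (k - n%:Z) * a.
have neighbours : (0 < x)%N -> in_semigroup2 a b x.-1 /\ in_semigroup2 a b x.+1 <->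
    in_semigroup2z a b up /\ in_semigroup2z a b down.
  move=> x_gt0; rewrite -!in_semigroup2zE.
  have [[-> ->] | [-> ->]] : (x.+1%:Z = up /\ x.-1%:Z = down) \/
      (x.+1%:Z = down /\ x.-1%:Z = up) by rewrite /up /down; case: bezout; lia.
    exact: and_comm.
  exact: iff_refl.
rewrite /isolated_gap -in_semigroup2zE Ex in_semigroup2zP //; split.
- case=> x_gt0 [k_gt0 /(neighbours x_gt0)[up_in down_in]].
  have n_lt : n%:Z < k + b by lia.
  have [m_le_c k_le_n] :=
    (in_semigroup2z_down a_gt0 coprime_ab c_range m_le_a n_lt).1 down_in.
  have k_pos : 0 < k by lia.
  have kn_le_b : k + n <= b by lia.
  have := (in_semigroup2z_up a_gt0 coprime_ab c_range m_le_a k_pos kn_le_b).1 up_in.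
  split; lia.
- case=> m_le_c a_le_cm k_range.
  have := isolated_gap_pos (c := c) (k := k); split; first lia.
  split; first lia.
  apply/neighbours; first lia.
  split; [apply/in_semigroup2z_up | apply/in_semigroup2z_down]; lia.
Qed.

Definition class_gaps (c : nat) : seq nat :=
  [seq c * b - k * a | k <- iota 1 n]%N.

Section Class.

Variable c : nat.
Hypotheses (c_lt_a : (c < a)%N) (m_le_c : (m <= c)%N) (a_le_cm : (a <= c + m)%N).

Lemma class_gap_lt (k : nat) : (k <= n)%N -> (k * a < c * b)%N.
Proof. by move=> k_le_n; have := isolated_gap_pos (c := c) (k := k); lia. Qed.

Lemma mem_class_gaps (x : nat) :
  x \in class_gaps c <-> isolated_gap a b x /\ x = c * b %[mod a].
Proof.
split.
- case/mapP=> k; rewrite mem_iota => k_range ->.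
  have Ex : (c * b - k * a)%N%:Z = c%:Z * b - k%:Z * a.
    by have := class_gap_lt (k := k); lia.
  split; last exact: eq_modn_subz Ex.
  by apply/(isolated_gapE c_lt_a Ex); split; lia.
- case=> gap x_mod; set k := (c * b %/ a)%N%:Z - (x %/ a)%N%:Z.
  have Ex : x%:Z = c%:Z * b - k * a.
    by move: x_mod; rewrite /k; have := divn_eq x a; have := divn_eq (c * b) a; lia.
  have [_ _ k_range] := (isolated_gapE c_lt_a Ex).1 gap.
  apply/mapP; exists `|k|%N; first by rewrite mem_iota; lia.
  by have := class_gap_lt (k := `|k|%N); lia.
Qed.

Lemma uniq_class_gaps : uniq (class_gaps c).
Proof.
rewrite map_inj_in_uniq ?iota_uniq // => k1 k2.
rewrite !mem_iota => k1_range k2_range.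
have := class_gap_lt (k := k1); have := class_gap_lt (k := k2).
move=> k2_lt k1_lt E; apply/eqP; rewrite -(eqn_pmul2r a_gt0); apply/eqP; lia.
Qed.

End Class.

End IsolatedGaps.

Local Close Scope ring_scope.

Theorem proposition3p11 (a b : nat) (u v : int) :
  1 < a -> a < b -> coprime a b -> definitely_least a b u v ->
  forall i : nat, 1 <= i <= a - 1 ->
    (exists x, in_I_ia a b i x) ->
    exists s : seq nat,
      [/\ uniq s, (forall x, x \in s <-> in_I_ia a b i x) & size s = `|u|%N].
Proof.
move=> a_gt1 a_lt_b coprime_ab [bezout [u_le v_le]] i _ [x0 [gap0 mod0]].
have a_gt0 : 0 < a by lia.
have bezout_uv := bezout_abs a_gt1 (ltn_trans a_gt1 a_lt_b) bezout.
have [c [k0 [c_lt_a E0]]] := apery_decomposition x0 a_gt0 bezout.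
have [m_le_c a_le_cm _] :=
  (isolated_gapE a_gt0 coprime_ab u_le v_le bezout_uv c_lt_a E0).1 gap0.
exists (class_gaps a b `|u| c); split.
- exact: (uniq_class_gaps a_gt0 coprime_ab u_le v_le bezout_uv c_lt_a m_le_c a_le_cm).
- move=> x.
  rewrite (mem_class_gaps a_gt0 coprime_ab u_le v_le bezout_uv c_lt_a m_le_c a_le_cm).
  by rewrite /in_I_ia -mod0 (eq_modn_subz E0).
- by rewrite size_map size_iota.
Qed.
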